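(* Let $m_\alpha>0$ and $m_\beta>0$ be two masses, let $t_1<t_2$, and let $(q_{\alpha 1},p_{\alpha 1})$, $(q_{\beta 1},p_{\beta 1})\in\mathbb{R}^3\times\mathbb{R}^3$ be initial positions and momenta. For $\gamma\in\{\alpha,\beta\}$ let $(q_\gamma(t),p_\gamma(t))$ be the classical trajectory of a particle of mass $m_\gamma$ governed by the Hamiltonian $H_{m_\gamma}$ (described in the context) with $(q_\gamma(t_1),p_\gamma(t_1))=(q_{\gamma 1},p_{\gamma 1})$, and set $(q_{\gamma 2},p_{\gamma 2})=(q_\gamma(t_2),p_\gamma(t_2))$. Then \[ \frac{S_{cl}(t_2,t_1,q_{\alpha 1},p_{\alpha 1})}{m_\alpha}-\frac12\Big(\frac{p_{\alpha 2}}{m_\alpha}+\frac{p_{\beta 2}}{m_\beta}\Big)\cdot q_{\alpha 2}+\frac12\Big(\frac{p_{\alpha 1}}{m_\alpha}+\frac{p_{\beta 1}}{m_\beta}\Big)\cdot q_{\alpha 1} \] \[ =\frac{S_{cl}(t_2,t_1,q_{\beta 1},p_{\beta 1})}{m_\beta}-\frac12\Big(\frac{p_{\alpha 2}}{m_\alpha}+\frac{p_{\beta 2}}{m_\beta}\Big)\cdot q_{\beta 2}+\frac12\Big(\frac{p_{\alpha 1}}{m_\alpha}+\frac{p_{\beta 1}}{m_\beta}\Big)\cdot q_{\beta 1}, \] where the action on the left is computed for mass $m_\alpha$ and the one on the right for mass $m_\beta$. Equivalently, \[ \Big[\tfrac{S_{cl}(t_2,t_1,q_{\alpha 1},p_{\alpha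 1})}{m_\alpha}-\tfrac{p_{\alpha 2}}{m_\alpha}\cdot q_{\alpha 2}+\tfrac{p_{\alpha 1}}{m_\alpha}\cdot q_{\alpha 1}\Big]-\Big[\tfrac{S_{cl}(t_2,t_1,q_{\beta 1},p_{\beta 1})}{m_\beta}-\tfrac{p_{\beta 2}}{m_\beta}\cdot q_{\beta 2}+\tfrac{p_{\beta 1}}{m_\beta}\cdot q_{\beta 1}\Big] =\Big(\tfrac{p_{\beta 2}}{m_\beta}-\tfrac{p_{\alpha 2}}{m_\alpha}\Big)\cdot\tfrac{q_{\alpha 2}+q_{\beta 2}}{2}-\Big(\tfrac{p_{\beta 1}}{m_\beta}-\tfrac{p_{\alpha 1}}{m_\alpha}\Big)\cdot\tfrac{q_{\alpha 1}+q_{\beta 1}}{2}. \]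
   Context: For a particle of mass $m>0$ with position $q\in\mathbb{R}^3$ and momentum $p\in\mathbb{R}^3$, the (time-dependent) external Hamiltonian is \[ H_m(q,p,t)=\frac{1}{2m}\,p\cdot G(t)\,p-\frac{m}{2}\,q\cdot\Gamma(t)\,q-\Omega(t)\cdot(q\times p)-m\,g(t)\cdot q, \] where $G(t)$ is a continuous family of real symmetric invertible $3\times3$ matrices, $\Gamma(t)$ a continuous family of real symmetric $3\times 3$ matrices (gravity gradient), $\Omega(t)\in\mathbb{R}^3$ a continuous rotation vector and $g(t)\in\mathbb{R}^3$ a continuous gravity vector; the functions $G,\Gamma,\Omega,g$ are the same for all masses. The classical trajectory of mass $m$ is the solution of Hamilton's equations $\dot q=\partial_p H_m$, $\dot p=-\partial_q H_m$ with the given initial data. The classical action is $S_{cl}(t_2,t_1,q_1,p_1)=\int_{t_1}^{t_2}\big(p\cdot\dot q-H_m(q,p,t)\big)\,dt$ evaluated along the classical trajectory of mass $m$ starting from $(q_1,p_1)$ at time $t_1$. A dot between vectors denotes the Euclidean inner product. *)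

From Stdlib Require Import Reals Lra.
From Coquelicot Require Import Coquelicot.
Open Scope R_scope.

(* Vectors of R^3 are represented by functions nat -> R; only the
   components 0,1,2 are meaningful. 3x3 matrices likewise by nat -> nat -> R. *)
Definition vec := nat -> R.
Definition mat := nat -> nat -> R.

Definition dot (u v : vec) : R := u 0%nat * v 0%nat + u 1%nat * v 1%nat + u 2%nat * v 2%nat.

Definition cross (u v : vec) : vec := fun i =>
  match i with
  | 0%nat => u 1%nat * v 2%nat - u 2%nat * v 1%nat
  | 1%nat => u 2%nat * v 0%nat - u 0%nat * v 2%nat
  | 2%nat => u 0%nat * v 1%nat - u 1%nat * v 0%nat
  | _ => 0
  end.

Definition mulmv (M : mat) (v : vec) : vec := fun i =>
  M i 0%nat * v 0%nat + M i 1%nat * v 1%nat + M i 2%nat * v 2%nat.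

Definition mulmm (M N : mat) : mat := fun i j =>
  M i 0%nat * N 0%nat j + M i 1%nat * N 1%nat j + M i 2%nat * N 2%nat j.

Definition kron (i j : nat) : R := if Nat.eqb i j then 1 else 0.

Definition symmetric (M : mat) : Prop :=
  forall i j, (i < 3)%nat -> (j < 3)%nat -> M i j = M j i.

Definition invertible (M : mat) : Prop :=
  exists N : mat, forall i j, (i < 3)%nat -> (j < 3)%nat ->
    mulmm M N i j = kron i j /\ mulmm N M i j = kron i j.

Definition upd (v : vec) (i : nat) (s : R) : vec :=
  fun j => if Nat.eqb j i then s else v j.

Definition Ham (G Gam : R -> mat) (Om g : R -> vec) (m : R) (q p : vec) (t : R) : R :=
  / (2 * m) * dot p (mulmv (G t) p) - m / 2 * dot q (mulmv (Gam t) q)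
  - dot (Om t) (cross q p) - m * dot (g t) q.

Definition dH_dp G Gam Om g m (q p : vec) (t : R) (i : nat) : R :=
  Derive (fun s => Ham G Gam Om g m q (upd p i s) t) (p i).
Definition dH_dq G Gam Om g m (q p : vec) (t : R) (i : nat) : R :=
  Derive (fun s => Ham G Gam Om g m (upd q i s) p t) (q i).

Definition hamilton_traj G Gam Om g m (q p : R -> vec) : Prop :=
  forall (t : R) (i : nat), (i < 3)%nat ->
    is_derive (fun s => q s i) t (dH_dp G Gam Om g m (q t) (p t) t i) /\
    is_derive (fun s => p s i) t (- dH_dq G Gam Om g m (q t) (p t) t i).

Definition velocity (q : R -> vec) (t : R) : vec := fun i => Derive (fun s => q s i) t.

Definition action G Gam Om g m (q p : R -> vec) (t1 t2 : R) : R :=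
  RInt (fun t => dot (p t) (velocity q t) - Ham G Gam Om g m (q t) (p t) t) t1 t2.

Definition coeffs_ok (G Gam : R -> mat) (Om g : R -> vec) : Prop :=
  (forall t, symmetric (G t) /\ invertible (G t) /\ symmetric (Gam t)) /\
  (forall i j t, continuous (fun s => G s i j) t) /\
  (forall i j t, continuous (fun s => Gam s i j) t) /\
  (forall i t, continuous (fun s => Om s i) t) /\
  (forall i t, continuous (fun s => g s i) t).

(* Writing u = p/m, the Hamiltonian scales as H_m(q, p, t) = m H_1(q, u, t), so (q, u)
   solves Hamilton's equations of H_1 whatever the mass, and S_cl/m is the action of H_1
   along (q, u).  H_1 is a quadratic polynomial in (q, u), for which the midpoint rule
   H(z_a) - H(z_b) = grad H((z_a + z_b)/2) . (z_a - z_b) is exact; along two solutions it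
   makes the difference of the Lagrangians u.q' - H_1 the time derivative of
   (u_a + u_b).(q_a - q_b)/2, and the theorem follows by integrating from t1 to t2. *)
From Stdlib Require Import Reals Lra Lia.
From Coquelicot Require Import Coquelicot.
Open Scope R_scope.

Lemma continuous_Rplus (f h : R -> R) t :
  continuous f t -> continuous h t -> continuous (fun s => f s + h s) t.
Proof. exact (continuous_plus f h t). Qed.

Lemma continuous_Rminus (f h : R -> R) t :
  continuous f t -> continuous h t -> continuous (fun s => f s - h s) t.
Proof. exact (continuous_minus f h t). Qed.

Lemma continuous_Rmult (f h : R -> R) t :
  continuous f t -> continuous h t -> continuous (fun s => f s * h s) t.
Proof. exact (continuous_mult f h t). Qed.

Lemma continuous_Ropp (f : R -> R) t : continuous f t -> continuous (fun s => - f s) t.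
Proof. exact (continuous_opp f t). Qed.

Lemma is_derive_Rplus (f h : R -> R) t df dh :
  is_derive f t df -> is_derive h t dh -> is_derive (fun s => f s + h s) t (df + dh).
Proof. exact (is_derive_plus f h t df dh). Qed.

Lemma is_derive_Rminus (f h : R -> R) t df dh :
  is_derive f t df -> is_derive h t dh -> is_derive (fun s => f s - h s) t (df - dh).
Proof. exact (is_derive_minus f h t df dh). Qed.

Lemma is_derive_dot (x y : R -> vec) (dx dy : vec) t :
  (forall i, (i < 3)%nat -> is_derive (fun s => x s i) t (dx i)) ->
  (forall i, (i < 3)%nat -> is_derive (fun s => y s i) t (dy i)) ->
  is_derive (fun s => dot (x s) (y s)) t (dot dx (y t) + dot (x t) dy).
Proof.
  intros Hx Hy.
  assert (Hxy : forall i, (i < 3)%nat ->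
    is_derive (fun s => x s i * y s i) t (dx i * y t i + x t i * dy i)).
  { intros i Hi. apply (is_derive_mult (fun s => x s i) (fun s => y s i)); auto.
    exact Rmult_comm. }
  unfold dot.
  replace (_ + _) with (dx 0%nat * y t 0%nat + x t 0%nat * dy 0%nat
    + (dx 1%nat * y t 1%nat + x t 1%nat * dy 1%nat)
    + (dx 2%nat * y t 2%nat + x t 2%nat * dy 2%nat)) by ring.
  apply is_derive_Rplus; [apply is_derive_Rplus |]; apply Hxy; lia.
Qed.

Definition transpose (M : mat) : mat := fun i j => M j i.

Section UnitMass.

Variables (G Gam : R -> mat) (Om g : R -> vec).

Definition grad_u (q u : vec) (t : R) : vec := fun i =>
  / 2 * (mulmv (G t) u i + mulmv (transpose (G t)) u i) - cross (Om t) q i.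

Definition grad_q (q u : vec) (t : R) : vec := fun i =>
  - / 2 * (mulmv (Gam t) q i + mulmv (transpose (Gam t)) q i) - cross u (Om t) i - g t i.

Lemma Ham_scale m q p t : m <> 0 ->
  Ham G Gam Om g m q p t = m * Ham G Gam Om g 1 q (fun i => p i / m) t.
Proof. intros Hm. unfold Ham, dot, mulmv, cross. field. exact Hm. Qed.

Lemma dH_dp_scale m q p t i : m <> 0 -> (i < 3)%nat ->
  dH_dp G Gam Om g m q p t i = grad_u q (fun j => p j / m) t i.
Proof.
  intros Hm Hi. unfold dH_dp.
  destruct i as [|[|[|i]]]; [| | | lia]; apply is_derive_unique;
    unfold Ham, upd, grad_u, transpose, dot, mulmv, cross; simpl;
    auto_derive; auto; field; exact Hm.
Qed.

Lemma dH_dq_scale m q p t i : m <> 0 -> (i < 3)%nat ->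
  dH_dq G Gam Om g m q p t i = m * grad_q q (fun j => p j / m) t i.
Proof.
  intros Hm Hi. unfold dH_dq.
  destruct i as [|[|[|i]]]; [| | | lia]; apply is_derive_unique;
    unfold Ham, upd, grad_q, transpose, dot, mulmv, cross; simpl;
    auto_derive; auto; field; exact Hm.
Qed.

Definition unit_mass_traj (q u : R -> vec) : Prop :=
  forall t i, (i < 3)%nat ->
    is_derive (fun s => q s i) t (grad_u (q t) (u t) t i) /\
    is_derive (fun s => u s i) t (- grad_q (q t) (u t) t i).

Lemma hamilton_traj_unit_mass m q p : m <> 0 ->
  hamilton_traj G Gam Om g m q p -> unit_mass_traj q (fun t i => p t i / m).
Proof.
  intros Hm H t i Hi. destruct (H t i Hi) as [Dq Dp].
  rewrite dH_dp_scale in Dq by assumption.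
  rewrite dH_dq_scale in Dp by assumption.
  split; [exact Dq |].
  replace (- grad_q _ _ t i) with (/ m * - (m * grad_q (q t) (fun j => p t j / m) t i))
    by (field; exact Hm).
  apply (is_derive_ext (fun s => / m * p s i)).
  - intros s. unfold Rdiv. apply Rmult_comm.
  - apply is_derive_scal. exact Dp.
Qed.

Definition lagrangian (q u : R -> vec) (t : R) : R :=
  dot (u t) (grad_u (q t) (u t) t) - Ham G Gam Om g 1 (q t) (u t) t.

(* Exact since Ham is quadratic in (q, u); grad_u and grad_q being affine, the mean of the
   gradients at the two points is the gradient at the midpoint. *)
Lemma Ham_midpoint qa ua qb ub t :
  Ham G Gam Om g 1 qa ua t - Ham G Gam Om g 1 qb ub t =
  / 2 * (dot (fun i => grad_q qa ua t i + grad_q qb ub t i) (fun i => qa i - qb i)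
       + dot (fun i => grad_u qa ua t i + grad_u qb ub t i) (fun i => ua i - ub i)).
Proof. unfold Ham, grad_q, grad_u, transpose, dot, mulmv, cross. field. Qed.

Lemma lagrangian_difference qa ua qb ub t :
  (dot ua (grad_u qa ua t) - Ham G Gam Om g 1 qa ua t)
  - (dot ub (grad_u qb ub t) - Ham G Gam Om g 1 qb ub t) =
  / 2 * (dot (fun i => - grad_q qa ua t i - grad_q qb ub t i) (fun i => qa i - qb i)
       + dot (fun i => ua i + ub i) (fun i => grad_u qa ua t i - grad_u qb ub t i)).
Proof.
  pose proof (Ham_midpoint qa ua qb ub t) as Hmid.
  unfold dot in *. lra.
Qed.

Definition boundary_term (qa ua qb ub : R -> vec) (t : R) : R :=
  / 2 * dot (fun i => ua t i + ub t i) (fun i => qa t i - qb t i).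

Lemma is_derive_boundary_term qa ua qb ub t :
  unit_mass_traj qa ua -> unit_mass_traj qb ub ->
  is_derive (boundary_term qa ua qb ub) t (lagrangian qa ua t - lagrangian qb ub t).
Proof.
  intros Ha Hb. unfold lagrangian, boundary_term. rewrite lagrangian_difference.
  apply is_derive_scal, is_derive_dot; intros i Hi.
  - apply is_derive_Rplus; [apply (Ha t i Hi) | apply (Hb t i Hi)].
  - apply is_derive_Rminus; [apply (Ha t i Hi) | apply (Hb t i Hi)].
Qed.

Hypothesis G_continuous : forall i j t, continuous (fun s => G s i j) t.
Hypothesis Gam_continuous : forall i j t, continuous (fun s => Gam s i j) t.
Hypothesis Om_continuous : forall i t, continuous (fun s => Om s i) t.
Hypothesis g_continuous : forall i t, continuous (fun s => g s i) t.

Lemma continuous_lagrangian q u t : unit_mass_traj q u -> continuous (lagrangian q u) t.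
Proof.
  intros H.
  assert (Hq : forall i, (i < 3)%nat -> continuous (fun s => q s i) t).
  { intros i Hi. apply (ex_derive_continuous (V := R_NormedModule)).
    eexists. apply (H t i Hi). }
  assert (Hu : forall i, (i < 3)%nat -> continuous (fun s => u s i) t).
  { intros i Hi. apply (ex_derive_continuous (V := R_NormedModule)).
    eexists. apply (H t i Hi). }
  unfold lagrangian, Ham, grad_u, transpose, dot, mulmv, cross.
  repeat match goal with
  | |- continuous (fun _ => _ + _) _ => apply continuous_Rplus
  | |- continuous (fun _ => _ - _) _ => apply continuous_Rminus
  | |- continuous (fun _ => _ * _) _ => apply continuous_Rmult
  | |- continuous (fun _ => - _) _ => apply continuous_Ropp
  | |- continuous (fun s => G s _ _) _ => apply G_continuous
  | |- continuous (fun s => Gam s _ _) _ => apply Gam_continuous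
  | |- continuous (fun s => Om s _) _ => apply Om_continuous
  | |- continuous (fun s => g s _) _ => apply g_continuous
  | |- continuous (fun s => q s _) _ => apply Hq; lia
  | |- continuous (fun s => u s _) _ => apply Hu; lia
  | |- continuous (fun _ => _) _ => apply continuous_const
  end.
Qed.

Lemma ex_RInt_lagrangian q u a b : unit_mass_traj q u -> ex_RInt (lagrangian q u) a b.
Proof.
  intros H. apply (ex_RInt_continuous (V := R_CompleteNormedModule)). intros t _. apply continuous_lagrangian, H.
Qed.

Lemma action_unit_mass m q p t1 t2 : m <> 0 -> hamilton_traj G Gam Om g m q p ->
  action G Gam Om g m q p t1 t2 = m * RInt (lagrangian q (fun t i => p t i / m)) t1 t2.
Proof.
  intros Hm H.
  pose proof (hamilton_traj_unit_mass _ _ _ Hm H) as Hu.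
  rewrite <- (RInt_scal (V := R_CompleteNormedModule))
    by apply ex_RInt_lagrangian, Hu.
  apply RInt_ext. intros t _.
  assert (Hv : forall i, (i < 3)%nat ->
    velocity q t i = grad_u (q t) (fun j => p t j / m) t i).
  { intros i Hi. apply is_derive_unique, (Hu t i Hi). }
  unfold action, lagrangian, dot. rewrite Ham_scale, !Hv by (assumption || lia).
  unfold scal; simpl; unfold mult; simpl. field. exact Hm.
Qed.

Lemma RInt_lagrangian_sub qa ua qb ub t1 t2 :
  unit_mass_traj qa ua -> unit_mass_traj qb ub ->
  RInt (lagrangian qa ua) t1 t2 - RInt (lagrangian qb ub) t1 t2
  = boundary_term qa ua qb ub t2 - boundary_term qa ua qb ub t1.
Proof.
  intros Ha Hb.
  rewrite <- (RInt_minus (V := R_CompleteNormedModule))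
    by (apply ex_RInt_lagrangian; assumption).
  apply (is_RInt_unique (V := R_CompleteNormedModule)).
  apply (is_RInt_derive (boundary_term qa ua qb ub)).
  - intros t _. apply is_derive_boundary_term; assumption.
  - intros t _. apply continuous_Rminus; apply continuous_lagrangian; assumption.
Qed.

End UnitMass.

Theorem theorem1 (G Gam : R -> mat) (Om g : R -> vec)
  (ma mb t1 t2 : R) (qa pa qb pb : R -> vec) :
  coeffs_ok G Gam Om g ->
  0 < ma -> 0 < mb -> t1 < t2 ->
  hamilton_traj G Gam Om g ma qa pa ->
  hamilton_traj G Gam Om g mb qb pb ->
  let v2 : vec := fun i => pa t2 i / ma + pb t2 i / mb in
  let v1 : vec := fun i => pa t1 i / ma + pb t1 i / mb in
  action G Gam Om g ma qa pa t1 t2 / ma - / 2 * dot v2 (qa t2) + / 2 * dot v1 (qa t1)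
  = action G Gam Om g mb qb pb t1 t2 / mb - / 2 * dot v2 (qb t2) + / 2 * dot v1 (qb t1).
Proof.
  intros [_ [HG [HGam [HOm Hg]]]] Hma Hmb _ Ha Hb v2 v1.
  assert (Hma0 : ma <> 0) by lra. assert (Hmb0 : mb <> 0) by lra.
  rewrite (action_unit_mass _ _ _ _ HG HGam HOm Hg _ _ _ _ _ Hma0 Ha),
          (action_unit_mass _ _ _ _ HG HGam HOm Hg _ _ _ _ _ Hmb0 Hb).
  pose proof (RInt_lagrangian_sub _ _ _ _ HG HGam HOm Hg _ _ _ _ t1 t2
    (hamilton_traj_unit_mass _ _ _ _ _ _ _ Hma0 Ha)
    (hamilton_traj_unit_mass _ _ _ _ _ _ _ Hmb0 Hb)) as Hsub.
  rewrite !Rmult_div_r by assumption.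
  unfold boundary_term, v1, v2, dot in *.
  lra.
Qed.
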